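(* Consider the Markov-chain trace semantics of an APPL program $\langle\mathcal{D},S_{\mathsf{main}}\rangle$ with stopping time $T$, fix $m\in\mathbb{N}$, and let $\psi:\Sigma\to\mathcal{M}_{\mathcal{R}}^{(m)}$ be an expected-potential function for upper bounds on stopping time, where $\mathcal{R}=([0,\infty],\le,+,\cdot,0,1)$. Let $A_n(\omega)=\langle n^k\rangle_{0\le k\le m}$, $A_T(\omega)=A_{T(\omega)}(\omega)=\langle T(\omega)^k\rangle_{0\le k\le m}$ and $\Psi_0(\omega)=\psi(\omega_0)$. Then $\mathbb{E}[A_T]\sqsubseteq\mathbb{E}[\Psi_0]$.
   Context: APPL: fix finite sets $\mathsf{VID}$ (real-valued program variables) and $\mathsf{FID}$. Expressions $E::=x\mid c\mid E_1+E_2\mid E_1*E_2$; conditions $L::=\mathsf{true}\mid\neg L\mid L_1\wedge L_2\mid E_1\le E_2$; distributions $D$ with probability measures $\mu_D$ on $\mathbb{R}$; statements $S::=\mathsf{skip}\mid\mathsf{tick}(c)\mid x:=E\mid x\sim D\mid\mathsf{call}\ f\mid\mathsf{while}\ L\ \mathsf{do}\ S\mid\mathsf{if}\ \mathsf{prob}(p)\ \mathsf{then}\ S_1\ \mathsf{else}\ S_2\mid\mathsf{if}\ L\ \mathsf{then}\ S_1\ \mathsf{else}\ S_2\mid S_1;S_2$; program $\langle\mathcal{D},S_{\mathsf{main}}\rangle$ with $\mathcal{D}:\mathsf{FID}\to$ statements. Continuations $K::=\mathsf{Kstop}\mid\mathsf{Kloop}(L,S,K)\mid\mathsf{Kseq}(S,K)$.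 Configurations $\sigma=\langle\gamma,S,K,\alpha\rangle$, $\gamma:\mathsf{VID}\to\mathbb{R}$, $\alpha\in\mathbb{R}$; $\Sigma$ the measurable space of configurations. One-step kernel $\mapsto$: $\langle\gamma,\mathsf{skip},\mathsf{Kstop},\alpha\rangle\mapsto\delta(\text{itself})$; $\langle\gamma,\mathsf{skip},\mathsf{Kloop}(L,S,K),\alpha\rangle\mapsto\delta(\langle\gamma,S,\mathsf{Kloop}(L,S,K),\alpha\rangle)$ if $\gamma(L)$ true else $\delta(\langle\gamma,\mathsf{skip},K,\alpha\rangle)$; $\langle\gamma,\mathsf{skip},\mathsf{Kseq}(S,K),\alpha\rangle\mapsto\delta(\langle\gamma,S,K,\alpha\rangle)$; $\mathsf{tick}(c)$: $\delta(\langle\gamma,\mathsf{skip},K,\alpha+c\rangle)$; $x:=E$: $\delta(\langle\gamma[x\mapsto\gamma(E)],\mathsf{skip},K,\alpha\rangle)$; $x\sim D$: law of $\langle\gamma[x\mapsto r],\mathsf{skip},K,\alpha\rangle$, $r\sim\mu_D$; $\mathsf{call}\ f$: $\delta(\langle\gamma,\mathcal{D}(f),K,\alpha\rangle)$; probabilistic branch: $p\,\delta(\langle\gamma,S_1,K,\alpha\rangle)+(1-p)\,\delta(\langle\gamma,S_2,K,\alpha\rangle)$; conditional according to $\gamma(L)$; $\mathsf{while}\ L\ \mathsf{do}\ S$: $\delta(\langle\gamma,\mathsf{skip},\mathsf{Kloop}(L,S,K),\alpha\rangle)$; $S_1;S_2$: $\delta(\langle\gamma,S_1,\mathsf{Kseq}(S_2,K),\alpha\rangle)$.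 $\Omega=\Sigma^{\mathbb{Z}_{\ge0}}$ with $\mathbb{P}$ the law of the Markov chain started at $\langle\lambda\_.0,S_{\mathsf{main}},\mathsf{Kstop},0\rangle$ with kernel $\mapsto$; $T(\omega)=\inf\{n:\omega_n=\langle\_,\mathsf{skip},\mathsf{Kstop},\_\rangle\}\in\mathbb{Z}_{\ge0}\cup\{\infty\}$. $\mathcal{M}_{\mathcal{R}}^{(m)}$ is the set of vectors $\langle u_k\rangle_{0\le k\le m}$ over $[0,\infty]$ with pointwise $\oplus$, $\langle u_k\rangle\otimes\langle v_k\rangle=\langle\sum_{i=0}^k\binom{k}{i}u_iv_{k-i}\rangle_{0\le k\le m}$, $\underline{1}=\langle1,0,\dots,0\rangle$, and pointwise order $\sqsubseteq$; expectations are componentwise. A (measurable) map $\psi:\Sigma\to\mathcal{M}_{\mathcal{R}}^{(m)}$ is an expected-potential function for upper bounds on stopping time if (i) $\psi(\sigma)_0=1$ for all $\sigma$, (ii) $\psi(\sigma)=\underline{1}$ if $\sigma=\langle\_,\mathsf{skip},\mathsf{Kstop},\_\rangle$, and (iii) $\psi(\sigma)\sqsupseteq\mathbb{E}_{\sigma'\sim{\mapsto}(\sigma)}[\langle1,1,\dots,1\rangle\otimes\psi(\sigma')]$ for every non-terminating configuration $\sigma$. *)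

From HB Require Import structures.
From mathcomp Require Import all_boot all_order all_algebra.
From mathcomp Require Import all_classical all_reals all_analysis.
From mathcomp Require Import measurable_realfun lebesgue_measure lebesgue_integral probability.
Set Implicit Arguments.
Unset Strict Implicit.
Unset Printing Implicit Defensive.
Import Order.TTheory GRing.Theory Num.Theory.
Local Open Scope classical_set_scope.
Local Open Scope ring_scope.

(* VID : program variables, FID : function identifiers,               *)
(* Dst : distribution identifiers (interpreted by mu_D : Dst -> prob.)*)
Section Syntax.
Variables (R : realType) (VID FID Dst : Type).

Inductive Expr :=
| EVar of VID
| EConst of R
| EAdd of Expr & Expr
| EMul of Expr & Expr.

Inductive Cond :=
| LTrue
| LNot of Cond
| LAnd of Cond & Cond
| LLe of Expr & Expr.

Inductive Stmt :=
| Sskip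
| Stick of R
| Sassign of VID & Expr
| Ssample of VID & Dst
| Scall of FID
| Swhile of Cond & Stmt
| Sprob (p : R) of (0 <= p <= 1) & Stmt & Stmt
| Sif of Cond & Stmt & Stmt
| Sseq of Stmt & Stmt.

Inductive Kont :=
| Kstop
| Kloop of Cond & Stmt & Kont
| Kseq of Stmt & Kont.

Fixpoint evalE (g : VID -> R) (e : Expr) : R :=
  match e with
  | EVar x => g x
  | EConst c => c
  | EAdd e1 e2 => evalE g e1 + evalE g e2
  | EMul e1 e2 => evalE g e1 * evalE g e2
  end.

Fixpoint evalL (g : VID -> R) (l : Cond) : bool :=
  match l with
  | LTrue => true
  | LNot l => ~~ evalL g l
  | LAnd l1 l2 => evalL g l1 && evalL g l2
  | LLe e1 e2 => evalE g e1 <= evalE g e2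
  end.

Record Conf := mkConf { cgam : VID -> R; cstm : Stmt; ckont : Kont; ccost : R }.

End Syntax.

Arguments Sskip {R VID FID Dst}.
Arguments Kstop {R VID FID Dst}.

HB.instance Definition _ (R : realType) (VID FID Dst : Type) :=
  gen_eqMixin (Conf R VID FID Dst).
HB.instance Definition _ (R : realType) (VID FID Dst : Type) :=
  gen_choiceMixin (Conf R VID FID Dst).
Definition conf_point (R : realType) (VID FID Dst : Type) : Conf R VID FID Dst :=
  mkConf (fun _ => 0%R) Sskip Kstop 0%R.
HB.instance Definition _ (R : realType) (VID FID Dst : Type) :=
  isPointed.Build (Conf R VID FID Dst) (conf_point R VID FID Dst).

Section Semantics.
Variables (R : realType) (VID : eqType) (FID Dst : Type).
Local Notation Conf := (Conf R VID FID Dst).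

Definition upd (g : VID -> R) (x : VID) (r : R) : VID -> R :=
  fun y => if y == x then r else g y.

Definition init_conf (Smain : Stmt R VID FID Dst) : Conf :=
  mkConf (fun _ => 0) Smain Kstop 0.


(* The measurable space Sigma of configurations: discrete on the syntactic
   part (S, K), Borel on each gamma(x) and on alpha. *)
Definition conf_gen : set (set Conf) :=
  [set A | exists SK : set (Stmt R VID FID Dst * Kont R VID FID Dst),
             A = [set s | SK (cstm s, ckont s)]]
  `|` [set A | exists x (B : set R), measurable B /\ A = [set s | B (cgam s x)]]
  `|` [set A | exists B : set R, measurable B /\ A = [set s | B (ccost s)]].

Definition Sigma := g_sigma_algebraType conf_gen.

Definition path_gen : set (set (nat -> Sigma)) :=
  [set C | exists n (A : set Sigma), measurable A /\ C = [set w | A (w n)]].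

Definition Omega := g_sigma_algebraType path_gen.

Definition terminal (s : Conf) : bool :=
  match cstm s, ckont s with Sskip, Kstop => true | _, _ => false end.

Local Open Scope ereal_scope.

(* Expectation E_{s' ~ |->(s)} [f s'] of f : Sigma -> \bar R under the
   one-step kernel |->, written out case by case (Dirac, two-point mixture,
   pushforward of mu_D). *)
Definition stepE (D : FID -> Stmt R VID FID Dst)
    (muD : Dst -> probability R R) (s : Sigma) (f : Sigma -> \bar R) : \bar R :=
  let: mkConf g St Kt a := s in
  match St with
  | Sskip =>
      match Kt with
      | Kstop => f s
      | Kloop L S' Kt' =>
          if evalL g L then f (mkConf g S' (Kloop L S' Kt') a)
          else f (mkConf g Sskip Kt' a)
      | Kseq S' Kt' => f (mkConf g S' Kt' a)
      end
  | Stick c => f (mkConf g Sskip Kt (a + c)%R)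
  | Sassign x e => f (mkConf (upd g x (evalE g e)) Sskip Kt a)
  | Ssample x d => \int[muD d]_r f (mkConf (upd g x r) Sskip Kt a)
  | Scall h => f (mkConf g (D h) Kt a)
  | Swhile L S' => f (mkConf g Sskip (Kloop L S' Kt) a)
  | Sprob p _ S1 S2 =>
      p%:E * f (mkConf g S1 Kt a) + (1 - p)%R%:E * f (mkConf g S2 Kt a)
  | Sif L S1 S2 =>
      if evalL g L then f (mkConf g S1 Kt a) else f (mkConf g S2 Kt a)
  | Sseq S1 S2 => f (mkConf g S1 (Kseq S2 Kt) a)
  end.

(* The moment semiring M_R^(m) over R = [0,oo]: vectors <u_k>_{0<=k<=m},
   represented as functions nat -> \bar R of which only indices k <= m
   are meaningful. *)
Definition mones : nat -> \bar R := fun _ => 1.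
Definition munit : nat -> \bar R := fun k => if k == 0%N then 1 else 0.
Definition motimes (u v : nat -> \bar R) : nat -> \bar R :=
  fun k => \sum_(i < k.+1) ('C(k, i))%:R%:E * (u i * v (k - i)%N).
Definition mle (m : nat) (u v : nat -> \bar R) : Prop :=
  forall k, (k <= m)%N -> u k <= v k.

Definition expected_potential_ub (D : FID -> Stmt R VID FID Dst)
    (muD : Dst -> probability R R) (m : nat) (psi : Sigma -> nat -> \bar R) :
    Prop :=
  [/\ (forall k, (k <= m)%N -> measurable_fun setT (fun s : Sigma => psi s k)),
      (forall s k, (k <= m)%N -> 0 <= psi s k),
      (forall s, psi s 0%N = 1),
      (forall s, terminal s ->
                     forall k, (k <= m)%N -> psi s k = munit k) &
      (forall s, ~~ terminal s ->
                     mle m (fun k => stepE D muD s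
                                       (fun s' => motimes mones (psi s') k))
                           (psi s))].

(* P is the law on Omega of the Markov chain with kernel |-> started at
   <\_.0, Smain, Kstop, 0>: its finite-dimensional distributions are the
   ones of the chain (initial law Dirac, transitions given by |->). *)
Definition markov_law (D : FID -> Stmt R VID FID Dst)
    (muD : Dst -> probability R R) (Smain : Stmt R VID FID Dst)
    (P : probability Omega R) : Prop :=
  [/\ (forall A : set Sigma, measurable A ->
     P [set w : Omega | A (w 0%N)] = (\1_A (init_conf Smain : Sigma))%:E) &
  (forall (n : nat) (A : nat -> set Sigma) (B : set Sigma),
     (forall i, measurable (A i)) -> measurable B ->
     P [set w : Omega | (forall i, (i <= n)%N -> A i (w i)) /\ B (w n.+1)] =
     \int[P]_(w in [set w : Omega | forall i, (i <= n)%N -> A i (w i)])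
        stepE D muD (w n) (fun s => (\1_B s)%:E))].

Definition stopT (w : Omega) : \bar R :=
  ereal_inf [set (n%:R)%:E | n in [set n | terminal (w n)]].

End Semantics.

(* Write A_t = <t^i>_i. The binomial theorem gives A_(t+1) = A_t \otimes <1,..,1>,
   so condition (iii) on psi says that the k-th component of
   Phi_n = A_min(n,T) \otimes psi(w_min(n,T)) does not increase in expectation:
   on {T > n} the one-step expectation of <1,..,1> \otimes psi(w_(n+1)) is at most
   psi(w_n), and off {T > n} the process is frozen. Hence
   E[Phi_n] <= E[Phi_0] = E[psi(w_0)]. As psi(_)_0 = 1, Phi_n dominates
   min(n,T)^k, and monotone convergence gives E[T^k] <= E[psi(w_0)_k].
   The one-step bound E[f(w_(n+1)); T > n] <= E[E_(|->(w_n)) f; T > n] holds with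
   equality for indicators by the Markov property and extends to nonnegative
   measurable f through simple functions. Its right-hand side need not be
   measurable in w, so it is only manipulated through monotonicity properties
   of the integral that hold for arbitrary nonnegative integrands. *)

From HB Require Import structures.
From mathcomp Require Import all_boot all_order all_algebra.
From mathcomp Require Import all_classical all_reals all_analysis.
From mathcomp Require Import measurable_realfun lebesgue_measure lebesgue_integral probability.
From mathcomp Require Import ring.
Import Order.TTheory GRing.Theory Num.Theory.
Local Open Scope classical_set_scope.
Local Open Scope ring_scope.
Local Open Scope ereal_scope.

Lemma ffactD n j r : (n ^_ (j + r) = n ^_ j * (n - j) ^_ r)%N.
Proof.
elim: r => [|r IH]; first by rewrite addn0 ffactn0 muln1.
by rewrite addnS !ffactnSr IH subnDA mulnA.
Qed.

Lemma mul_bin_sub n j r : ('C(n, j) * 'C(n - j, r) = 'C(n, r) * 'C(n - r, j))%N.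
Proof.
have E a b : ('C(n, a) * 'C(n - a, b) * (a`! * b`!) = n ^_ (a + b))%N.
  by rewrite ffactD -!bin_ffact; ring.
apply/eqP; rewrite -(@eqn_pmul2r (j`! * r`!)) ?muln_gt0 ?fact_gt0 //.
by rewrite E [(j`! * _)%N]mulnC E addnC.
Qed.

Lemma sum_bin_expn_bin n t r : (r <= n)%N ->
  (\sum_(j < n.+1) 'C(n, j) * t ^ j * 'C(n - j, r) = 'C(n, r) * t.+1 ^ (n - r))%N.
Proof.
move=> rn.
under eq_bigr do rewrite mulnAC mul_bin_sub -mulnA.
rewrite -big_distrr /= -[t.+1]add1n expnDn.
rewrite (big_ord_widen n.+1 (fun i => 'C(n - r, i) * (1 ^ (n - r - i) * t ^ i)))%N;
  last by rewrite ltnS leq_subr.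
congr (_ * _)%N; rewrite [RHS]big_mkcond; apply: eq_bigr => j _.
case: ifP => [_|/negbT]; first by rewrite exp1n mul1n mulnC.
by rewrite -leqNgt => /bin_small ->; rewrite mul0n.
Qed.

Section moment_semiring.
Variable R : realType.
Implicit Types (u v : nat -> \bar R) (t k : nat).

Definition mpow t : nat -> \bar R := fun i => (t ^ i)%:R%:E.

Lemma motimesEr u v k :
  motimes u v k = \sum_(r < k.+1) 'C(k, r)%:R%:E * (u (k - r)%N * v r).
Proof.
rewrite /motimes (reindex_inj rev_ord_inj) /=; apply: eq_bigr => r _.
have rk : (r <= k)%N by rewrite -ltnS.
by rewrite subSS bin_sub // subKn.
Qed.

Lemma motimes_ge0 u v k : (forall i, (i <= k)%N -> 0 <= u i) ->
  (forall i, (i <= k)%N -> 0 <= v i) -> 0 <= motimes u v k.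
Proof.
move=> u0 v0; apply: sume_ge0 => i _.
have ik : (i <= k)%N by rewrite -ltnS.
by rewrite !mule_ge0 ?lee_fin ?u0 ?v0 ?leq_subr.
Qed.

Lemma measurable_motimes d (T : measurableType d) u (f : T -> nat -> \bar R) k :
  (forall i, (i <= k)%N -> measurable_fun setT (f ^~ i)) ->
  measurable_fun setT (fun x => motimes u (f x) k).
Proof.
move=> mf; apply: emeasurable_sum => i.
by do 2 apply: measurable_funeM; apply: mf; rewrite leq_subr.
Qed.

Lemma motimes_mpowE t v k :
  motimes (mpow t) v k = \sum_(j < k.+1) ('C(k, j) * t ^ j)%:R%:E * v (k - j)%N.
Proof. by apply: eq_bigr => j _; rewrite /mpow muleA -EFinM -natrM. Qed.

Lemma motimes_mpow0 v k : motimes (mpow 0) v k = v k.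
Proof.
rewrite /motimes big_ord_recl big1 ?adde0 => [|i _].
  by rewrite /mpow bin0 mul1e mul1e subn0.
by rewrite /mpow exp0n // mul0e mule0.
Qed.

Lemma mpow_le_motimes t v k : v 0%N = 1 -> (forall i, (i <= k)%N -> 0 <= v i) ->
  mpow t k <= motimes (mpow t) v k.
Proof.
move=> v01 v0; rewrite /motimes big_ord_recr /= subnn v01 binn mule1 mul1e.
apply: lee_paddl; last exact: lexx.
apply: sume_ge0 => i _; rewrite !mule_ge0 ?lee_fin //.
by apply: v0; rewrite leq_subr.
Qed.

Lemma motimes_mones v k j : (j <= k)%N ->
  motimes (@mones R) v j = \sum_(r < k.+1) 'C(j, r)%:R%:E * v r.
Proof.
move=> jk; rewrite motimesEr /mones.
under eq_bigr do rewrite mul1e.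
rewrite (big_ord_widen k.+1 (fun r => 'C(j, r)%:R%:E * v r)) // big_mkcond /=.
apply: eq_bigr => r _; case: ifP => // /negbT; rewrite -leqNgt => /bin_small ->.
by rewrite mul0e.
Qed.

Lemma motimes_mpowS t v k : (forall i, (i <= k)%N -> 0 <= v i) ->
  motimes (mpow t.+1) v k = motimes (mpow t) (motimes (@mones R) v) k.
Proof.
move=> v0.
have v0' (r : 'I_k.+1) : 0 <= v r by apply: v0; rewrite -ltnS.
transitivity (\sum_(j < k.+1) \sum_(r < k.+1)
    ('C(k, j) * t ^ j * 'C(k - j, r))%:R%:E * v r); last first.
  rewrite [RHS]/motimes; apply: eq_bigr => j _.
  rewrite (@motimes_mones v k) ?leq_subr // /mpow muleA -EFinM -natrM.
  rewrite ge0_sume_distrr => [|r _]; last by rewrite mule_ge0.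
  by apply: eq_bigr => r _; rewrite muleA -EFinM -natrM.
rewrite exchange_big motimesEr /=; apply: eq_bigr => r _.
have rk : (r <= k)%N by rewrite -ltnS.
rewrite -ge0_sume_distrl // sumEFin -natr_sum sum_bin_expn_bin //.
by rewrite /mpow muleA -EFinM -natrM.
Qed.

End moment_semiring.

Lemma ge_ereal_supD (R : realType) (A B : set (\bar R)) (M : \bar R) :
  A !=set0 -> B !=set0 ->
  (forall a, A a -> 0 <= a) -> (forall b, B b -> 0 <= b) ->
  (forall a b, A a -> B b -> a + b <= M) -> ereal_sup A + ereal_sup B <= M.
Proof.
move=> [a0 Aa0] [b0 Bb0] A0 B0 AB.
have [->|Mfin] : M = +oo \/ M \is a fin_num.
  have : 0 <= M by apply: le_trans (AB _ _ Aa0 Bb0); exact: adde_ge0 (A0 _ _) (B0 _ _).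
  by case: (M) => [r|_|] //; [right|left].
  by rewrite leey.
have finB b : B b -> b \is a fin_num.
  move=> Bb; rewrite ge0_fin_numE ?B0 //.
  apply: le_lt_trans (lee_paddl (A0 _ Aa0) (lexx b)) _.
  by apply: le_lt_trans (AB _ _ Aa0 Bb) _; rewrite -(fineK Mfin) ltry.
have supA_le b : B b -> ereal_sup A <= M - b.
  by move=> Bb; apply: ge_ereal_sup => a Aa; rewrite leeBrDr ?finB ?AB.
have finA : ereal_sup A \is a fin_num.
  rewrite ge0_fin_numE; last exact: le_trans (A0 _ Aa0) (ereal_sup_ubound Aa0).
  apply: le_lt_trans (supA_le _ Bb0) _.
  by rewrite -(fineK Mfin) -(fineK (finB _ Bb0)) -EFinB ltry.
rewrite -leeBrDl //; apply: ge_ereal_sup => b Bb.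
by rewrite leeBrDl // -leeBrDr ?finB ?supA_le.
Qed.

(* Unlike their library counterparts these need no measurability: the integral
   of a nonnegative function is the supremum of the integrals of the simple
   functions below it. *)
Section ge0_integral_nonmeasurable.
Context {d} {T : measurableType d} {R : realType} (mu : {measure set T -> \bar R}).
Variable A : set T.
Implicit Types f g : T -> \bar R.
Import HBNNSimple.

Let point0 : point = 0 :> \bar R. Proof. by []. Qed.

Lemma ge0_le_integral_nonmeasurable f g :
  (forall x, A x -> 0 <= f x) -> (forall x, A x -> f x <= g x) ->
  \int[mu]_(x in A) f x <= \int[mu]_(x in A) g x.
Proof.
move=> f0 fg.
have g0 x : A x -> 0 <= g x by move=> Ax; exact: le_trans (f0 _ Ax) (fg _ Ax).
rewrite !ge0_integralE //; apply: ereal_sup_le => _ [h hf <-]; exists h => // x.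
apply: le_trans (hf x) _; rewrite /patch; case: ifP => // /set_mem; exact: fg.
Qed.

Lemma ge0_integralZl_le f (c : R) : (0 <= c)%R -> (forall x, A x -> 0 <= f x) ->
  c%:E * \int[mu]_(x in A) f x <= \int[mu]_(x in A) (c%:E * f x).
Proof.
rewrite le_eqVlt => /predU1P[<- f0|c0 f0].
  by rewrite mul0e integral_ge0 // => x _; rewrite mul0e.
have cf0 x : A x -> 0 <= c%:E * f x.
  by move=> Ax; apply: mule_ge0; [rewrite lee_fin ltW|exact: f0].
rewrite !ge0_integralE // -ereal_sup_pZl //.
apply: ereal_sup_le => _ [_ [h hf <-] <-].
exists (scale_nnsfun h (ltW c0)); last exact: sintegralrM.
move=> x; have := hf x; rewrite /patch; case: ifP => _ /= hx; rewrite EFinM.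
  by apply: lee_wpmul2l => //; rewrite lee_fin ltW.
rewrite point0 in hx *.
by rewrite -(mule0 c%:E); apply: lee_wpmul2l => //; rewrite lee_fin ltW.
Qed.

Lemma ge0_integralD_le f g :
  (forall x, A x -> 0 <= f x) -> (forall x, A x -> 0 <= g x) ->
  \int[mu]_(x in A) f x + \int[mu]_(x in A) g x <= \int[mu]_(x in A) (f x + g x).
Proof.
move=> f0 g0.
have fg0 x : A x -> 0 <= f x + g x by move=> Ax; rewrite adde_ge0 ?f0 ?g0.
rewrite !ge0_integralE //; apply: ge_ereal_supD.
- exists (sintegral mu nnsfun0), nnsfun0 => // x /=; exact: erestrict_ge0.
- exists (sintegral mu nnsfun0), nnsfun0 => // x /=; exact: erestrict_ge0.
- by move=> _ [h _ <-]; exact: sintegral_ge0.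
- by move=> _ [h _ <-]; exact: sintegral_ge0.
move=> _ _ [h1 h1f <-] [h2 h2f <-]; rewrite -sintegralD.
apply: ereal_sup_ubound; exists (add_nnsfun h1 h2) => // x.
have := h1f x; have := h2f x; rewrite /patch /=; case: ifP => _ h2x h1x.
  by rewrite EFinD leeD.
by rewrite point0 in h1x h2x *; rewrite EFinD -(adde0 0) leeD.
Qed.

End ge0_integral_nonmeasurable.

Lemma ge0_integral_setUv {d} {T : measurableType d} {R : realType}
    (mu : {measure set T -> \bar R}) (A : set T) (f : T -> \bar R) :
  measurable A -> measurable_fun setT f -> (forall x, 0 <= f x) ->
  \int[mu]_x f x = \int[mu]_(x in A) f x + \int[mu]_(x in ~` A) f x.
Proof.
move=> mA mf f0; rewrite -(setUv A) ge0_integral_setU ?setUv //.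
- exact: measurableC.
- exact/disj_setPCl.
Qed.

Lemma measurable_cst_set d (T : measurableType d) (P : Prop) :
  measurable [set _ : T | P].
Proof.
have [p|np] := pselect P.
  by rewrite (_ : [set _ | P] = setT) //; apply/seteqP; split.
by rewrite (_ : [set _ | P] = set0) //; apply/seteqP; split.
Qed.

Lemma expe_pinfty (R : realType) k : (+oo : \bar R) ^+ k.+1 = +oo.
Proof. by elim: k => [//|k IH]; rewrite expeS IH mulyy. Qed.

Section semantics.
Context {R : realType} {VID : eqType} {FID Dst : Type}.
Context {muD : Dst -> probability R R} {D : FID -> Stmt R VID FID Dst}.
Local Notation Sig := (Sigma R VID FID Dst).
Local Notation Om := (Omega R VID FID Dst).
Local Notation stepE := (stepE D muD).

Lemma measurable_proj n : measurable_fun [set: Om] (fun w : Om => w n).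
Proof. by move=> _ A mA; rewrite setTI; apply: sub_sigma_algebra; exists n, A. Qed.

Lemma measurable_preimage_proj n (B : set Sig) :
  measurable B -> measurable ((fun w : Om => w n) @^-1` B).
Proof. by move=> mB; have := measurable_proj n measurableT _ mB; rewrite setTI. Qed.

Lemma measurable_comp_proj (f : Sig -> \bar R) n A : measurable_fun setT f ->
  measurable_fun A (fun w : Om => f (w n)).
Proof. by move=> mf; apply: measurable_funTS; exact: measurableT_comp mf (measurable_proj n). Qed.
Lemma measurable_terminal : measurable [set s : Sig | terminal s].
Proof.
apply: sub_sigma_algebra; left; left.
exists [set p | terminal (mkConf (fun _ => 0%R) p.1 p.2 0%R : Conf R VID FID Dst)].
by apply/seteqP; split => -[].
Qed.

Lemma measurable_upd_conf (g : VID -> R) x S K (a : R) :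
  measurable_fun [set: R] (fun r => mkConf (upd g x r) S K a : Sig).
Proof.
apply: (@measurability _ _ R Sig setT _ (@conf_gen R VID FID Dst)) => //.
move=> _ [B [[[SK ->]|[y [B' [mB' ->]]]]|[B' [mB' ->]]] <-]; rewrite setTI /preimage /=.
- exact: measurable_cst_set.
- by rewrite /upd; case: (y =P x) => _; [exact: mB'|exact: measurable_cst_set].
- exact: measurable_cst_set.
Qed.

Lemma stepE_cases (s : Sig) :
  [\/ exists t : Sig, forall f, stepE s f = f t,
      exists p (t1 t2 : Sig), (0 <= p <= 1)%R /\
        forall f, stepE s f = p%:E * f t1 + (1 - p)%:E * f t2 |
      exists d g x K a, forall f,
        stepE s f = \int[muD d]_r f (mkConf (upd g x r) Sskip K a)].
Proof.
case: s => g [|c|x e|x d|h|L S'|p hp S1 S2|L S1 S2|S1 S2] K a.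
- case: K => [|L S' K|S' K]; apply: Or31; try by eexists.
  by case E: (evalL g L); eexists => f /=; rewrite E; reflexivity.
- by apply: Or31; eexists.
- by apply: Or31; eexists.
- by apply: Or33; do 5 eexists.
- by apply: Or31; eexists.
- by apply: Or31; eexists.
- by apply: Or32; do 3 eexists; split; [exact: hp|].
- by apply: Or31; case E: (evalL g L); eexists => f /=; rewrite E; reflexivity.
- by apply: Or31; eexists.
Qed.

Lemma stepE_ge0 s f : (forall y, 0 <= f y) -> 0 <= stepE s f.
Proof.
move=> f0.
case: (stepE_cases s) => [[t E]|[p [t1 [t2 [/andP[p0 p1] E]]]]|[d [g [x [K [a E]]]]]]; rewrite !E.
- exact: f0.
- by rewrite adde_ge0 // mule_ge0 // lee_fin subr_ge0.
- exact: integral_ge0.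
Qed.

Lemma stepED s f g : (forall y, 0 <= f y) -> (forall y, 0 <= g y) ->
  measurable_fun setT f -> measurable_fun setT g ->
  stepE s (fun y => f y + g y) = stepE s f + stepE s g.
Proof.
move=> f0 g0 mf mg.
case: (stepE_cases s) => [[t E]|[p [t1 [t2 [/andP[p0 p1] E]]]]|[d [g' [x [K [a E]]]]]]; rewrite !E.
- by [].
- by rewrite !ge0_muleDr // addeACA.
- by rewrite ge0_integralD //; exact: measurableT_comp (measurable_upd_conf _ _ _ _ _).
Qed.

Lemma stepEZ s (c : R) f : (0 <= c)%R -> (forall y, 0 <= f y) ->
  measurable_fun setT f -> stepE s (fun y => c%:E * f y) = c%:E * stepE s f.
Proof.
move=> c0 f0 mf.
case: (stepE_cases s) => [[t E]|[p [t1 [t2 [/andP[p0 p1] E]]]]|[d [g [x [K [a E]]]]]]; rewrite !E.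
- by [].
- rewrite ge0_muleDr ?mule_ge0 ?lee_fin ?subr_ge0 //.
  by rewrite !(muleCA c%:E).
- by rewrite ge0_integralZl_EFin //; exact: measurableT_comp (measurable_upd_conf _ _ _ _ _).
Qed.

Lemma le_stepE s f g : (forall y, 0 <= f y) -> (forall y, f y <= g y) ->
  measurable_fun setT f -> measurable_fun setT g -> stepE s f <= stepE s g.
Proof.
move=> f0 fg mf mg.
case: (stepE_cases s) => [[t E]|[p [t1 [t2 [/andP[p0 p1] E]]]]|[d [g' [x [K [a E]]]]]]; rewrite !E.
- exact: fg.
- by apply: leeD; apply: lee_wpmul2l => //; rewrite lee_fin ?subr_ge0.
- by apply: ge0_le_integral => //; exact: measurableT_comp (measurable_upd_conf _ _ _ _ _).
Qed.

Fixpoint alive n (w : Om) : bool :=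
  if n is n'.+1 then alive n' w && ~~ terminal (w n) else ~~ terminal (w 0%N).

Lemma aliveP n w : reflect (forall i, (i <= n)%N -> ~~ terminal (w i)) (alive n w).
Proof.
apply: (iffP idP).
  elim: n => [|n IH] /= => [w0 i|/andP[/IH h1 h2] i]; first by rewrite leqn0 => /eqP ->.
  by rewrite leq_eqVlt => /predU1P[-> //|]; exact: h1.
elim: n => [|n IH] h /=; first exact: h.
by rewrite IH ?h // => i /leqW; exact: h.
Qed.

(* [Alive n] is the event {T > n}. *)
Definition Alive n := [set w : Om | alive n w].

Lemma measurable_nonterminal : measurable [set s : Sig | ~~ terminal s].
Proof.
rewrite (_ : [set s | _] = ~` [set s : Sig | terminal s]).
  exact: measurableC measurable_terminal.
by apply/seteqP; split => s /= /negP.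
Qed.

Lemma measurable_Alive n : measurable (Alive n).
Proof.
have mnt := measurable_nonterminal.
elim: n => [|n IH]; first by have := measurable_preimage_proj 0 _ mnt.
rewrite (_ : Alive n.+1 = Alive n `&` (fun w : Om => w n.+1) @^-1` [set s | ~~ terminal s]).
  exact: measurableI IH (measurable_preimage_proj _ _ mnt).
by apply/seteqP; split => w /= /andP.
Qed.

Lemma measurable_alive n : measurable_fun setT (alive n).
Proof. by apply: (measurable_fun_bool true); rewrite setTI; exact: measurable_Alive. Qed.

Lemma stopT_first (w : Om) j : terminal (w j) ->
  (forall i, terminal (w i) -> (j <= i)%N) -> stopT w = j%:R%:E.
Proof.
move=> wj jmin; apply/eqP; rewrite eq_le; apply/andP; split.
  by apply: ge_ereal_inf; exists j%:R%:E => //; exists j.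
by apply: le_ereal_inf_tmp => _ [i wi <-]; rewrite lee_fin ler_nat jmin.
Qed.

Lemma stopT_nonterminal (w : Om) : (forall i, ~~ terminal (w i)) -> stopT w = +oo.
Proof.
move=> wnt; rewrite /stopT (_ : [set _ | _ in _] = set0) ?ereal_inf0 //.
by apply/seteqP; split => // _ [i wi <-]; move: (wnt i); rewrite wi.
Qed.

Section markov_step.
Import HBNNSimple.
Context {P : probability Om R}.
Hypothesis P_step : forall (n : nat) (A : nat -> set Sig) (B : set Sig),
  (forall i, measurable (A i)) -> measurable B ->
  P [set w : Om | (forall i, (i <= n)%N -> A i (w i)) /\ B (w n.+1)] =
  \int[P]_(w in [set w : Om | forall i, (i <= n)%N -> A i (w i)])
     stepE (w n) (fun s => (\1_B s)%:E).

Definition next_le_stepE n (g : Sig -> \bar R) :=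
  \int[P]_(w in Alive n) g (w n.+1) <= \int[P]_(w in Alive n) stepE (w n) g.

Lemma next_le_stepE_indic n B : measurable B -> next_le_stepE n (fun y => (\1_B y)%:E).
Proof.
move=> mB; rewrite /next_le_stepE.
have AliveE : [set w : Om | forall i, (i <= n)%N -> ~~ terminal (w i)] = Alive n.
  by apply/seteqP; split => w /aliveP.
have := P_step n (fun _ => [set s : Sig | ~~ terminal s]) B (fun _ => measurable_nonterminal) mB.
rewrite AliveE => <-.
have mnext := measurable_preimage_proj n.+1 _ mB.
rewrite (eq_integral (fun w => (\1_((fun w : Om => w n.+1) @^-1` B) w)%:E)) => [|w _].
  rewrite integral_indic //; last exact: measurable_Alive.
  suff -> : (fun w : Om => w n.+1) @^-1` B `&` Alive n =
    [set w | (forall i, (i <= n)%N -> ~~ terminal (w i)) /\ B (w n.+1)] by [].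
  by apply/seteqP; split => w /= [h1 h2]; split => //; apply/aliveP.
by rewrite !indicE.
Qed.
Lemma next_le_stepED n f g : (forall y, 0 <= f y) -> (forall y, 0 <= g y) ->
  measurable_fun setT f -> measurable_fun setT g ->
  next_le_stepE n f -> next_le_stepE n g -> next_le_stepE n (fun y => f y + g y).
Proof.
move=> f0 g0 mf mg lef leg; rewrite /next_le_stepE.
have mA := measurable_Alive n.
rewrite ge0_integralD //; last 2 first.
- exact: measurable_comp_proj.
- exact: measurable_comp_proj.
rewrite [X in _ <= X](eq_integral (fun w : Om => stepE (w n) f + stepE (w n) g)) => [|w _];
  last by rewrite stepED.
apply: le_trans _ (ge0_integralD_le P (Alive n) _ _
  (fun w _ => stepE_ge0 _ _ f0) (fun w _ => stepE_ge0 _ _ g0)).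
exact: leeD.
Qed.

Lemma next_le_stepEZ n (c : R) f : (0 <= c)%R -> (forall y, 0 <= f y) ->
  measurable_fun setT f -> next_le_stepE n f -> next_le_stepE n (fun y => c%:E * f y).
Proof.
move=> c0 f0 mf lef; rewrite /next_le_stepE.
have mA := measurable_Alive n.
rewrite ge0_integralZl_EFin //; last exact: measurable_comp_proj.
rewrite [X in _ <= X](eq_integral (fun w : Om => c%:E * stepE (w n) f)) => [|w _];
  last by rewrite stepEZ.
apply: le_trans _ (ge0_integralZl_le P (Alive n) _ _ c0 (fun w _ => stepE_ge0 _ _ f0)).
by apply: lee_wpmul2l; rewrite ?lee_fin.
Qed.

Lemma next_le_stepE_sum n (I : Type) (s : seq I) (f : I -> Sig -> \bar R) :
  (forall i y, 0 <= f i y) -> (forall i, measurable_fun setT (f i)) ->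
  (forall i, next_le_stepE n (f i)) ->
  next_le_stepE n (fun y => \sum_(i <- s) f i y).
Proof.
move=> f0 mf lef; elim: s => [|i s IH].
  rewrite /next_le_stepE; under eq_integral do rewrite big_nil.
  by rewrite integral0 integral_ge0 // => w _; apply: stepE_ge0 => y; rewrite big_nil.
rewrite (_ : (fun y => _) = (fun y => f i y + \sum_(j <- s) f j y)); last first.
  by apply/funext => y; rewrite big_cons.
apply: next_le_stepED => //.
- by move=> y; apply: sume_ge0.
- exact: emeasurable_sum.
Qed.

Lemma next_le_stepE_nnsfun n (phi : {nnsfun Sig >-> R}) :
  next_le_stepE n (fun y => (phi y)%:E).
Proof.
set r := finmap.enum_fset (fset_set (range phi)).
have r0 i : (0 <= r`_i)%R.
  have [ir|ri] := ltnP i (size r); last by rewrite nth_default.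
  have : r`_i \in range phi by rewrite -(in_fset_set (fimfunP phi)); exact: mem_nth.
  by rewrite inE => -[y _ <-]; exact: fun_ge0.
have mB i : measurable (phi @^-1` [set r`_i]) by rewrite -[_ @^-1` _]setTI; exact: measurable_funPT.
rewrite (_ : (fun y => _) = fun y =>
    \sum_(i < size r) (r`_i)%:E * (\1_(phi @^-1` [set r`_i]) y)%:E); last first.
  by apply/funext => y; rewrite [in LHS]fimfunEord -sumEFin; under eq_bigr do rewrite EFinM.
apply: next_le_stepE_sum => [i y|i|i].
- by rewrite mule_ge0 ?lee_fin.
- by apply/measurable_funeM/measurable_EFinP; exact: measurable_indic.
- apply: next_le_stepEZ; first exact: r0.
  + by move=> y; rewrite lee_fin.
  + by apply/measurable_EFinP; exact: measurable_indic.
  + exact: next_le_stepE_indic.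
Qed.
Lemma next_le_stepE_ge0 n g : (forall y, 0 <= g y) -> measurable_fun setT g ->
  next_le_stepE n g.
Proof.
move=> g0 mg; rewrite /next_le_stepE; have mA := measurable_Alive n.
pose phi := nnsfun_approx measurableT mg.
have phi0 j y : 0 <= (phi j y)%:E by rewrite lee_fin.
have phi_le j y : (phi j y)%:E <= g y.
  by rewrite /phi nnsfun_approxE; apply: le_approx => // x _; exact: g0.
have phi_nd y a b : (a <= b)%N -> (phi a y)%:E <= (phi b y)%:E.
  by move=> ab; rewrite lee_fin; exact/lefP/nd_nnsfun_approx.
have mphi j : measurable_fun setT (fun y => (phi j y)%:E).
  by apply/measurable_EFinP; exact: measurable_funPT.
have mphi_next j : measurable_fun (Alive n) (fun w : Om => (phi j (w n.+1))%:E).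
  exact: measurable_comp_proj (mphi j).
rewrite (eq_integral (fun w : Om => limn (fun j => (phi j (w n.+1))%:E))) => [|w _];
  last by apply/esym/cvg_lim => //; exact: cvg_nnsfun_approx.
rewrite monotone_convergence // => [|w _ a b]; last exact: phi_nd.
apply: lime_le.
  apply: ereal_nondecreasing_is_cvgn => a b ab.
  by apply: ge0_le_integral => // w _; exact: phi_nd.
apply: nearW => j; apply: le_trans (next_le_stepE_nnsfun n (phi j)) _.
apply: ge0_le_integral_nonmeasurable => w _; first exact: stepE_ge0.
exact: le_stepE.
Qed.

Section stopped_potential.
Context {m : nat} {psi : Sig -> nat -> \bar R} {k : nat}.
Hypothesis km : (k <= m)%N.
Hypothesis measurable_psi : forall q, (q <= m)%N -> measurable_fun setT (psi ^~ q).
Hypothesis psi_ge0 : forall s q, (q <= m)%N -> 0 <= psi s q.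
Hypothesis psi0 : forall s, psi s 0%N = 1.
Hypothesis psi_super : forall s : Sig, ~~ terminal s ->
  mle m (fun q => stepE s (fun s' => motimes (mones R) (psi s') q)) (psi s).

Let psi_ge0k s q : (q <= k)%N -> 0 <= psi s q.
Proof. by move=> qk; apply: psi_ge0; exact: leq_trans qk km. Qed.

Let measurable_psik q : (q <= k)%N -> measurable_fun setT (psi ^~ q).
Proof. by move=> qk; apply: measurable_psi; exact: leq_trans qk km. Qed.

Let ones_psi_ge0 s q : (q <= k)%N -> 0 <= motimes (mones R) (psi s) q.
Proof.
by move=> qk; apply: motimes_ge0 => i iq; [exact: lee01|exact: psi_ge0k (leq_trans iq qk)].
Qed.

Let measurable_ones_psi q : (q <= k)%N ->
  measurable_fun setT (fun s => motimes (mones R) (psi s) q).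
Proof.
by move=> qk; apply: measurable_motimes => i iq; exact: measurable_psik (leq_trans iq qk).
Qed.

(* [stopped_time n w] is min(n, T w), and [stopped_potential n w] is the k-th
   component of A_t \otimes psi(w_t) at t = min(n, T w), where A_t = <t^i>_i. *)
Fixpoint stopped_time n (w : Om) : nat :=
  if n is n'.+1 then if alive n' w then n else stopped_time n' w else 0%N.

Fixpoint stopped_potential n (w : Om) : \bar R :=
  if n is n'.+1 then
    if alive n' w then motimes (mpow R n) (psi (w n)) k else stopped_potential n' w
  else motimes (mpow R 0) (psi (w 0%N)) k.

Lemma stopped_potential_ge0 n w : 0 <= stopped_potential n w.
Proof.
have pot0 t s : 0 <= motimes (mpow R t) (psi s) k.
  by apply: motimes_ge0 => i ik; [rewrite lee_fin|exact: psi_ge0k].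
by elim: n => [|n IH] /=; [|case: ifP].
Qed.

Lemma measurable_stopped_potential n : measurable_fun setT (stopped_potential n).
Proof.
have mpot t : measurable_fun setT (fun w : Om => motimes (mpow R t) (psi (w t)) k).
  by apply: measurable_motimes => i ik; exact: measurable_comp_proj (measurable_psik _ ik).
elim: n => [|n IH] /=; first exact: mpot.
exact: measurable_fun_ifT (measurable_alive n) (mpot _) IH.
Qed.

Lemma int_motimes_mones_next_le n q : (q <= k)%N ->
  \int[P]_(w in Alive n) motimes (mones R) (psi (w n.+1)) q <=
  \int[P]_(w in Alive n) psi (w n) q.
Proof.
move=> qk.
have : next_le_stepE n (fun s => motimes (mones R) (psi s) q).
  by apply: next_le_stepE_ge0 => [s|]; [exact: ones_psi_ge0|exact: measurable_ones_psi].
move=> /le_trans; apply; apply: ge0_le_integral_nonmeasurable => w /aliveP walive.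
  by apply: stepE_ge0 => s; exact: ones_psi_ge0.
exact: psi_super (walive n (leqnn n)) q (leq_trans qk km).
Qed.

Lemma int_alive_potential_next_le n :
  \int[P]_(w in Alive n) motimes (mpow R n.+1) (psi (w n.+1)) k <=
  \int[P]_(w in Alive n) motimes (mpow R n) (psi (w n)) k.
Proof.
have mA := measurable_Alive n.
rewrite (eq_integral (fun w : Om => \sum_(j < k.+1) ('C(k, j) * n ^ j)%:R%:E *
    motimes (mones R) (psi (w n.+1)) (k - j)%N)) => [|w _]; last first.
  by rewrite motimes_mpowS ?motimes_mpowE // => i; exact: psi_ge0k.
rewrite [X in _ <= X](eq_integral (fun w : Om => \sum_(j < k.+1)
    ('C(k, j) * n ^ j)%:R%:E * psi (w n) (k - j)%N)) => [|w _]; last exact: motimes_mpowE.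
have jk (j : 'I_k.+1) : (k - j <= k)%N by exact: leq_subr.
rewrite !ge0_integral_sum // => [|j|j w _|j|j w _]; last 4 first.
- by apply: measurable_funeM; exact: measurable_comp_proj (measurable_psik _ (jk j)).
- by rewrite mule_ge0 ?lee_fin ?psi_ge0k.
- by apply: measurable_funeM; exact: measurable_comp_proj (measurable_ones_psi _ (jk j)).
- by rewrite mule_ge0 ?lee_fin ?ones_psi_ge0.
apply: lee_sum => j _; rewrite !ge0_integralZl_EFin // => [|w _||w _|].
- by apply: lee_wpmul2l; [rewrite lee_fin | exact: int_motimes_mones_next_le].
- exact: psi_ge0k.
- exact: measurable_comp_proj (measurable_psik _ (jk j)).
- exact: ones_psi_ge0.
- exact: measurable_comp_proj (measurable_ones_psi _ (jk j)).
Qed.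

Lemma le_stopped_potentialS n :
  \int[P]_w stopped_potential n.+1 w <= \int[P]_w stopped_potential n w.
Proof.
have mA := measurable_Alive n.
rewrite !(ge0_integral_setUv P _ _ mA (measurable_stopped_potential _) (stopped_potential_ge0 _)).
apply: leeD.
  rewrite (eq_integral (fun w : Om => motimes (mpow R n.+1) (psi (w n.+1)) k));
    last by move=> w /set_mem walive /=; rewrite ifT.
  rewrite [X in _ <= X](eq_integral (fun w : Om => motimes (mpow R n) (psi (w n)) k)).
    exact: int_alive_potential_next_le.
  by case: n {mA} => [|n] w // /set_mem /andP[walive _] /=; rewrite ifT.
apply: ge0_le_integral_nonmeasurable => [w _|w walive /=].
  exact: stopped_potential_ge0.
by rewrite ifF //; apply/negP.
Qed.

Lemma int_stopped_potential_le n :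
  \int[P]_w stopped_potential n w <= \int[P]_w psi (w 0%N) k.
Proof.
elim: n => [|n IH]; last exact: le_trans (le_stopped_potentialS n) IH.
by rewrite (eq_integral (fun w : Om => psi (w 0%N) k)) // => w _; exact: motimes_mpow0.
Qed.

Lemma stopped_time_le n w : (stopped_time n w <= n)%N.
Proof. by elim: n => [|n IH] //=; case: ifP => // _; exact: leqW. Qed.

Lemma stopped_time_homo w : {homo stopped_time ^~ w : a b / (a <= b)%N}.
Proof.
apply: homo_leq => [//|y x z|n]; first exact: leq_trans.
by rewrite /=; case: ifP => // _; exact: leqW (stopped_time_le n w).
Qed.

Lemma mpow_stopped_time_le n w : mpow R (stopped_time n w) k <= stopped_potential n w.
Proof.
have le_pot t s : mpow R t k <= motimes (mpow R t) (psi s) k.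
  by apply: mpow_le_motimes => // i; exact: psi_ge0k.
by elim: n => [|n IH] /=; [|case: ifP].
Qed.

Lemma measurable_mpow_stopped_time n :
  measurable_fun setT (fun w => mpow R (stopped_time n w) k).
Proof.
elim: n => [|n IH] /=; first exact: measurable_cst.
rewrite (_ : (fun w => _) = fun w : Om =>
  if alive n w then mpow R n.+1 k else mpow R (stopped_time n w) k); last first.
  by apply/funext => w; case: ifP.
exact: measurable_fun_ifT (measurable_alive n) (measurable_cst _) IH.
Qed.

Lemma mpow_stopped_time_cvg w :
  mpow R (stopped_time n w) k @[n --> \oo] --> stopT w ^+ k.
Proof.
have [hit|wnt] := pselect (exists j, terminal (w j)).
  case: (ex_minnP hit) => j wj jmin.
  have aliveE n : alive n w = (n < j)%N.
    apply/aliveP/idP => [walive|nj i iin].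
      by rewrite ltnNge; apply/negP => /walive; rewrite wj.
    by apply/negP => /jmin; rewrite leqNgt (leq_ltn_trans iin nj).
  have stoppedE n : stopped_time n w = minn n j.
    elim: n => [|n IH] /=; first by rewrite min0n.
    rewrite aliveE; case: ltnP => [nj|jn]; first by rewrite (minn_idPl nj).
    by rewrite IH !(minn_idPr _) // leqW.
  rewrite (stopT_first w j wj jmin) -EFin_expe -natrX; apply: cvg_near_cst.
  by near=> n; rewrite stoppedE (minn_idPr _) //; near: n; exists j.
have {}wnt i : ~~ terminal (w i) by apply/negP => wi; apply: wnt; exists i.
have stoppedE n : stopped_time n w = n.
  by elim: n => [|n IH] //=; rewrite (_ : alive n w) //; apply/aliveP.
rewrite stopT_nonterminal //; case: k => [|k'].
  by apply: cvg_near_cst; near=> n; rewrite /mpow expn0.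
rewrite expe_pinfty; apply: (@gee_cvgy _ _ _ _ (fun n => n%:R%:E)); last exact/cvgenyP.
near=> n; rewrite stoppedE lee_fin ler_nat -{1}(expn1 n) leq_pexp2l //.
by near: n; exists 1%N.
Unshelve. all: by end_near.
Qed.

Lemma int_stopT_pow_le : \int[P]_w (stopT w ^+ k) <= \int[P]_w psi (w 0%N) k.
Proof.
have nd w a b : (a <= b)%N -> mpow R (stopped_time a w) k <= mpow R (stopped_time b w) k.
  move=> ab; rewrite lee_fin ler_nat; have [->|k0] := posnP k; first by rewrite !expn0.
  by rewrite leq_exp2r // stopped_time_homo.
rewrite (eq_integral (fun w : Om => limn (fun n => mpow R (stopped_time n w) k))) => [|w _];
  last exact/esym/cvg_lim/mpow_stopped_time_cvg.
rewrite monotone_convergence // => [|n|n w _|w _]; last 3 first.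
- exact: measurable_mpow_stopped_time.
- by rewrite lee_fin.
- exact: nd.
apply: lime_le.
  apply: ereal_nondecreasing_is_cvgn => a b ab.
  apply: ge0_le_integral => //; last by move=> w _; exact: nd.
  - by move=> w _; rewrite lee_fin.
  - exact: measurable_mpow_stopped_time.
  - exact: measurable_mpow_stopped_time.
apply: nearW => n; apply: le_trans (int_stopped_potential_le n).
apply: ge0_le_integral => //; last by move=> w _; exact: mpow_stopped_time_le.
- by move=> w _; rewrite lee_fin.
- exact: measurable_mpow_stopped_time.
- exact: measurable_stopped_potential.
Qed.

End stopped_potential.
End markov_step.
End semantics.

Theorem theoremG2 (R : realType) (VID FID : finType) (Dst : Type)
    (muD : Dst -> probability R R)
    (D : FID -> Stmt R VID FID Dst) (Smain : Stmt R VID FID Dst)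
    (P : probability (Omega R VID FID Dst) R)
    (m : nat) (psi : Sigma R VID FID Dst -> nat -> \bar R) :
  markov_law D muD Smain P ->
  expected_potential_ub D muD m psi ->
  mle m (fun k => \int[P]_w (stopT w ^+ k))      (* E[A_T] *)
        (fun k => \int[P]_w psi (w 0%N) k).       (* E[Psi_0] *)
Proof.
move=> [_ P_step] [measurable_psi psi_ge0 psi0 _ psi_super] k km.
by have := int_stopT_pow_le P_step km measurable_psi psi_ge0 psi0 psi_super.
Qed.
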